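(* Let $c_1,\dots,c_m:\{1,\dots,n\}\to\mathbb{R}$ be cost functions and $n$ a positive integer. For each $t\in\{1,\dots,m\}$ let $(f^*_t,\rho^*_t)$ be an optimal solution of the linear program $$\max_{f\in\mathbb{R}^n,\ \rho\in\mathbb{R}}\ \rho\quad\text{s.t.}\quad c_t(y)-\rho\,c_t(x)+(x-z)f(x)-(y-z)f(x+1)\ge0\quad\forall (x,y,z)\in\mathcal{I}_{\mathcal{R}},$$ where $f\in\mathbb{R}^n$ is viewed as a function $f:\{1,\dots,n\}\to\mathbb{R}$ and $c_t(0)=f(0)=f(n+1)=0$. Then $\mathbf{f}_{\mathrm{OPT}}=\{f^*_1,\dots,f^*_m\}$ is an optimal set of distribution rules, i.e. $\mathbf{f}_{\mathrm{OPT}}\in\arg\min_{\mathbf{f}=(f_1,\dots,f_m)\in\mathbb{R}^{n\times m}_{\ge0}}\mathrm{PoA}(\mathcal{G}^n_{\{(c_t,f_t)\}_{t=1}^m})$, and for the set of types $T^*=\{(c_t,f^*_t)\}_{t=1}^m$, $$\mathrm{PoA}(\mathcal{G}^n_{T^*})=\max_{t\in\{1,\dots,m\}}\frac{1}{\rho^*_t}.$$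
   Context: For a positive integer $n$ and a finite set of resource types $T=\{(c_1,f_1),\dots,(c_m,f_m)\}$ with $c_t,f_t:\{1,\dots,n\}\to\mathbb{R}$ and $c_t(0)=0$, the class $\mathcal{G}_T^n$ consists of all local resource allocation games: agent set $N=\{1,\dots,n\}$; a finite set of resources $\mathcal{R}$; for each $r\in\mathcal{R}$ a value $v_r\ge0$ and a type $(c,f)\in T$, giving $c_r=v_rc$, $f_r=v_rf$ (the $f_t$ are called distribution rules); action sets $\mathcal{A}_i\subseteq2^{\mathcal{R}}$, $\mathcal{A}=\mathcal{A}_1\times\dots\times\mathcal{A}_n$. For $a\in\mathcal{A}$, $|a|_r$ is the number of agents $i$ with $r\in a_i$; $C(a)=\sum_rc_r(|a|_r)$ and $J_i(a)=\sum_{r\in a_i}f_r(|a|_r)$. A Nash equilibrium is $a^{ne}$ with $J_i(a^{ne})\le J_i(a_i,a^{ne}_{-i})$ for all $a_i\in\mathcal{A}_i$, $i\in N$; $\mathrm{PoA}(G)=\max_{a\in\mathrm{NE}(G)}C(a)/\min_{a\in\mathcal{A}}C(a)$ and $\mathrm{PoA}(\mathcal{G}_T^n)=\sup_{G\in\mathcal{G}_T^n}\mathrm{PoA}(G)$. With $\mathbb{N}=\{0,1,2,\dots\}$: $\mathcal{I}=\{(x,y,z)\in\mathbb{N}^3:1\le x+y-z\le n,\ z\le\min\{x,y\}\}$, $\mathcal{I}_{\mathcal{R}}=\{(x,y,z)\in\mathcal{I}:x+y-z=n\text{ or }(x-z)(y-z)z=0\}$. *)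

From HB Require Import structures.
From mathcomp Require Import all_boot all_order all_algebra.
From mathcomp Require Import boolp classical_sets constructive_ereal ereal reals.
Set Implicit Arguments. Unset Strict Implicit. Unset Printing Implicit Defensive.
Import Order.TTheory GRing.Theory Num.Theory.
Local Open Scope ring_scope.

Section LRAG.
Variables (R : realType) (n m : nat).

Record lrag := LRAG {
  res : finType;
  val : res -> R;
  ty : res -> 'I_m;
  acts : 'I_n -> {set {set res}};
  val_ge0 : forall r, 0 <= val r;
  acts_nonempty : forall i, exists A, A \in acts i
}.

Variable G : lrag.

Definition profile := {ffun 'I_n -> {set res G}}.

Definition feasible (a : profile) : bool := [forall i, a i \in acts G i].

Definition load (a : profile) (r : res G) : nat := #|[pred i : 'I_n | r \in a i]|.

Definition cost (c : 'I_m -> nat -> R) (a : profile) : R :=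
  \sum_(r : res G) val r * c (ty r) (load a r).

Definition agent_cost (f : 'I_m -> nat -> R) (i : 'I_n) (a : profile) : R :=
  \sum_(r in a i) val r * f (ty r) (load a r).

Definition deviate (a : profile) (i : 'I_n) (ai : {set res G}) : profile :=
  [ffun j => if j == i then ai else a j].

Definition is_NE (f : 'I_m -> nat -> R) (a : profile) : Prop :=
  feasible a /\
  forall i (ai : {set res G}), ai \in acts G i ->
    agent_cost f i a <= agent_cost f i (deviate a i ai).

Definition opt_cost (c : 'I_m -> nat -> R) : \bar R :=
  ereal_inf [set (cost c a)%:E | a in [set a : profile | feasible a]].

(* PoA(G) = max_{a in NE(G)} C(a) / min_a C(a), computed in the extended reals
   (x / 0 = +oo for x > 0). *)
Definition PoA_game (c f : 'I_m -> nat -> R) : \bar R :=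
  ereal_sup [set ((cost c a)%:E / opt_cost c)%E | a in [set a | is_NE f a]].

End LRAG.

Definition PoA_class (R : realType) (n m : nat) (c f : 'I_m -> nat -> R) : \bar R :=
  ereal_sup [set y | exists G : lrag R n m, y = PoA_game G c f].

Definition fext (R : realType) (n : nat) (f : nat -> R) (k : nat) : R :=
  if (1 <= k <= n)%N then f k else 0.

Definition in_IR (n x y z : nat) : bool :=
  [&& (1 <= x + y - z)%N, (x + y - z <= n)%N, (z <= minn x y)%N &
      ((x + y - z == n)%N || ((x - z) * (y - z) * z == 0)%N)].

Definition LP_feasible (R : realType) (n : nat) (ct : nat -> R) (f : nat -> R) (rho : R) : Prop :=
  forall x y z : nat, in_IR n x y z ->
    0 <= ct y - rho * ct x + (x%:R - z%:R) * fext n f x - (y%:R - z%:R) * fext n f x.+1.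

Definition LP_optimal (R : realType) (n : nat) (ct : nat -> R) (f : nat -> R) (rho : R) : Prop :=
  LP_feasible n ct f rho /\
  forall (f' : nat -> R) (rho' : R), LP_feasible n ct f' rho' -> rho' <= rho.

(* Upper bound: a smoothness argument.  Summing the Nash conditions for the
   unilateral deviations of a Nash equilibrium a towards any profile a' splits
   into one term per resource, determined by the loads x, y of the resource in
   a, a' and the number z of agents using it in both.  Each term is bounded by
   the LP constraint of the resource type; the constraints over all of I follow
   from those over I_R because they are affine in z.  Hence
   (min_t rho*_t) C(a) <= C(a').
   Lower bound: fix a type t, any distribution rules f and rho > rho*_t.  No
   nonnegative multiple of f is LP-feasible with value rho, so by a Farkas lemma
   in one unknown some nonnegative combination of two LP constraints for f is
   violated.  A cyclic game with n agents and two kinds of resources, whose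
   loads are given by the two triples, then has a Nash equilibrium costing more
   than 1/rho times the optimum.  So every f has PoA >= max_t 1/rho*_t, which
   f* attains. *)

From Pilot Require Import Defs.
From HB Require Import structures.
From mathcomp Require Import all_boot all_order all_algebra.
From mathcomp Require Import boolp classical_sets constructive_ereal ereal reals.
From mathcomp Require Import zify ring lra.
Import Order.TTheory GRing.Theory Num.Theory.
Local Open Scope ring_scope.
Set Implicit Arguments. Unset Strict Implicit. Unset Printing Implicit Defensive.

(* [x], [y]: loads of a resource in two profiles, [z]: agents using it in both. *)
Definition deviation_gain (R : realType) (n : nat) (f : nat -> R) (x y z : nat) : R :=
  (y%:R - z%:R) * fext n f x.+1 - (x%:R - z%:R) * fext n f x.

Lemma deviation_gainZ (R : realType) (n : nat) (mu : R) (F : nat -> R) (x y z : nat) :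
  deviation_gain n (fun k => mu * F k) x y z = mu * deviation_gain n F x y z.
Proof. by rewrite /deviation_gain /fext; do 2 case: ifP => _; ring. Qed.

Lemma deviation_gainE (R : realType) (n : nat) (F : nat -> R) (x y z : nat) :
  (z <= minn x y)%N -> (x + y - z <= n)%N ->
  F x *+ z + F x.+1 *+ (y - z) - F x *+ x = deviation_gain n F x y z.
Proof.
move=> z_le xyz_n.
have fextM k j : k = 0%N \/ (1 <= j <= n)%N -> F j *+ k = k%:R * fext n F j.
  by case=> [->|jn]; rewrite ?mulr0n ?mul0r // /fext jn mulr_natl.
rewrite (fextM z x) ?(fextM x x) ?(fextM (y - z)%N x.+1) ?natrB /deviation_gain;
  [ring | lia..].
Qed.

Section LinearProgram.
Variables (R : realType) (n : nat) (ct f : nat -> R) (rho : R).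

Lemma LP_feasibleP : LP_feasible n ct f rho <->
  forall x y z, in_IR n x y z -> deviation_gain n f x y z <= ct y - rho * ct x.
Proof.
have slackE x y z : ct y - rho * ct x + (x%:R - z%:R) * fext n f x
    - (y%:R - z%:R) * fext n f x.+1 = ct y - rho * ct x - deviation_gain n f x y z.
  by rewrite /deviation_gain; ring.
by split=> H x y z /H; rewrite slackE subr_ge0.
Qed.

Lemma deviation_gain_le_LP (x y z : nat) : ct 0 = 0 -> LP_feasible n ct f rho ->
  (x + y - z <= n)%N -> (z <= minn x y)%N ->
  deviation_gain n f x y z <= ct y - rho * ct x.
Proof.
move=> ct0 /LP_feasibleP feas xyz_n z_le.
have [xyz0|xyz_gt0] := posnP (x + y - z).
  have [-> -> ->] : [/\ x = 0, y = 0 & z = 0]%N by split; lia.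
  by rewrite /deviation_gain ct0 !(subrr, mulr0, mul0r).
pose slack k := ct y - rho * ct x - deviation_gain n f x y k.
suff : 0 <= slack z by rewrite subr_ge0.
set lo := (x + y - n)%N; set hi := minn x y.
have [lo_le_z z_le_hi] : (lo <= z)%N /\ (z <= hi)%N by split; lia.
have slack_lo : 0 <= slack lo.
  by rewrite subr_ge0; apply: feas; rewrite /in_IR; apply/and4P; split; lia.
have slack_hi : 0 <= slack hi.
  by rewrite subr_ge0; apply: feas; rewrite /in_IR; apply/and4P; split; lia.
have [lo_eq_hi|lo_ne_hi] := eqVneq lo hi.
  by have -> : z = lo by lia.
(* the slack is affine in z, and the extreme values lo, hi of z lie in I_R *)
have affine : (hi%:R - lo%:R) * slack z =
    (hi%:R - z%:R) * slack lo + (z%:R - lo%:R) * slack hi :> R.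
  by rewrite /slack /deviation_gain; ring.
have lo_z : (lo%:R : R) <= z%:R by rewrite ler_nat.
have z_hi : (z%:R : R) <= hi%:R by rewrite ler_nat.
have lo_hi : (lo%:R : R) < hi%:R by rewrite ltr_nat; lia.
have : 0 <= (hi%:R - lo%:R) * slack z.
  by rewrite affine; apply: addr_ge0; apply: mulr_ge0; lra.
by rewrite pmulr_rge0 // subr_gt0.
Qed.

Hypothesis ct_ge0 : forall k, (k <= n)%N -> 0 <= ct k.

Lemma LP_optimal_ge0 : LP_optimal n ct f rho -> 0 <= rho.
Proof.
move=> [_ opt]; apply: (opt (fun=> 0) 0) => x y z /and4P[_ xyz_n z_le _].
have fext0 k : fext n (fun=> 0 : R) k = 0 by rewrite /fext; case: ifP.
by rewrite !fext0 !mulr0 mul0r !subr0 addr0; apply: ct_ge0; lia.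
Qed.

Lemma LP_feasible_ge0 (k : nat) : ct 0 = 0 -> 0 <= rho ->
  LP_feasible n ct f rho -> (1 <= k <= n)%N -> 0 <= f k.
Proof.
move=> ct0 rho_ge0 /LP_feasibleP feas k_n.
have : in_IR n k 0 0 by rewrite /in_IR; apply/and4P; split; lia.
move/feas; rewrite /deviation_gain /fext k_n ct0 !subr0 mul0r !sub0r lerN2 => kf.
have : 0 <= k%:R * f k.
  by apply: le_trans kf; apply: mulr_ge0 => //; apply: ct_ge0; lia.
by rewrite pmulr_rge0 // ltr0n; lia.
Qed.

End LinearProgram.

Lemma farkas_dim1 (R : realFieldType) (K : finType) (P : pred K) (a D : K -> R) :
  (forall k1 k2 (t1 t2 : R), P k1 -> P k2 -> 0 <= t1 -> 0 <= t2 ->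
     0 <= t1 * D k1 + t2 * D k2 -> 0 <= t1 * a k1 + t2 * a k2) ->
  exists2 mu, 0 <= mu & forall k, P k -> mu * D k <= a k.
Proof.
(* [mu] is squeezed between the bounds [a k / D k] of the constraints with
   [D k < 0] and those with [D k > 0]; [pair] makes these bounds compatible. *)
move=> pair.
have single k : P k -> 0 <= D k -> 0 <= a k.
  move=> Pk Dk; have := pair k k 1 0 Pk Pk ler01 (lexx 0).
  by rewrite !mul0r !addr0 !mul1r; apply.
have cross k j : P k -> P j -> D k < 0 -> 0 < D j -> a k / D k <= a j / D j.
  move=> Pk Pj Dk Dj; rewrite ler_ndivrMr // mulrAC ler_pdivrMr //.
  have : 0 <= D j * a k + - D k * a j.
    have nDk : 0 <= - D k by rewrite oppr_ge0 ltW.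
    by apply: pair => //; [exact: ltW | rewrite mulrC mulNr subrr].
  nra.
set lb := \big[Order.max/0]_(k | P k && (D k < 0)) (a k / D k).
exists (\big[Order.min/lb]_(k | P k && (0 < D k)) (a k / D k)) => [|k Pk].
  apply: le_bigmin => [|k /andP[Pk Dk]]; first exact: bigmax_ge_id.
  by apply: divr_ge0; [exact: single (ltW Dk)|exact: ltW].
have [Dk|Dk|Dk] := ltrgtP (D k) 0.
- rewrite -ler_ndivrMr //; apply: le_bigmin => [|j /andP[Pj Dj]].
    by apply: (bigmax_sup k); rewrite ?Pk ?Dk.
  exact: cross.
- by rewrite -ler_pdivlMr //; apply: bigmin_le_cond; rewrite Pk Dk.
- by rewrite Dk mulr0 single // Dk.
Qed.

Lemma card_ord_range (N lo hi : nat) : (hi <= N)%N ->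
  #|[pred k : 'I_N | (lo <= k < hi)%N]| = (hi - lo)%N.
Proof.
move=> hi_N; rewrite -sum1_card.
rewrite (eq_bigl (fun k : 'I_N => (k < hi) && (lo <= k))%N);
  last by move=> k; rewrite inE andbC.
rewrite -(big_geq_mkord lo N (fun k => k < hi)%N (fun=> 1%N)).
by rewrite -(big_nat_widen lo hi N xpredT (fun=> 1%N)) // sum_nat_const_nat muln1.
Qed.

Lemma card_preim_inj (T : finType) (g : T -> T) (Q : pred T) :
  injective g -> #|[pred i | Q (g i)]| = #|Q|.
Proof.
move=> g_inj; rewrite -cardsE -(card_preimset _ g_inj).
by apply: eq_card => i; rewrite !inE.
Qed.

Section Games.
Variables (R : realType) (n m : nat) (G : lrag R n m).
Implicit Types (a : profile G) (c f : 'I_m -> nat -> R).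

Lemma load_le a r : (load a r <= n)%N.
Proof. by apply: leq_trans (max_card _) _; rewrite card_ord. Qed.

Lemma load_deviate a i (S : {set res G}) r : r \in S ->
  load (deviate a i S) r = if r \in a i then load a r else (load a r).+1.
Proof.
move=> rS; rewrite /load (cardD1 i) [in RHS](cardD1 i) !inE ffunE eqxx rS /=.
have -> : #|[predD1 [pred j | r \in deviate a i S j] & i]| =
          #|[predD1 [pred j | r \in a j] & i]|.
  by apply: eq_card => j; rewrite !inE ffunE; case: (j =P i).
by case: (r \in a i).
Qed.

Variables (c : 'I_m -> nat -> R).
Hypothesis c_ge0 : forall t k, (k <= n)%N -> 0 <= c t k.

Lemma cost_ge0 a : 0 <= cost c a.
Proof. by apply: sumr_ge0 => r _; rewrite mulr_ge0 ?val_ge0 ?c_ge0 ?load_le. Qed.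

Lemma opt_costE a : feasible a ->
  exists2 r, opt_cost G c = r%:E & 0 <= r <= cost c a.
Proof.
move=> a_feas.
have opt_le : (opt_cost G c <= (cost c a)%:E)%E by apply: ereal_inf_lbound; exists a.
have opt_ge0 : (0 <= opt_cost G c)%E.
  by apply: le_ereal_inf_tmp => _ [b _ <-]; rewrite lee_fin cost_ge0.
move: opt_le opt_ge0; case: (opt_cost G c) => [r| |] //= r_le r_ge0.
by exists r; rewrite // -!lee_fin r_le r_ge0.
Qed.

Lemma PoA_class_ge f a a' (rho : R) : 0 < rho -> is_NE f a -> feasible a' ->
  cost c a' < rho * cost c a -> ((rho^-1)%:E <= PoA_class n c f)%E.
Proof.
move=> rho_gt0 a_NE a'_feas cost_lt.
apply: le_ereal_sup_tmp; exists (PoA_game G c f); first by exists G.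
apply: le_ereal_sup_tmp; exists ((cost c a)%:E / opt_cost G c)%E; first by exists a.
have [r -> /andP[r_ge0 r_le]] := opt_costE a'_feas.
have Ca_gt0 : 0 < cost c a.
  by rewrite -(pmulr_rgt0 _ rho_gt0); apply: le_lt_trans cost_lt; apply: cost_ge0.
have [r0|r_neq0] := eqVneq r 0.
  by rewrite r0 inve0 mulry gtr0_sg // mul1e leey.
have r_gt0 : 0 < r by rewrite lt_def r_neq0.
rewrite inver (negbTE r_neq0) -EFinM lee_fin ler_pdivlMr // mulrC.
rewrite -ler_pdivlMr ?invr_gt0 // invrK mulrC.
exact/ltW/(le_lt_trans r_le).
Qed.

End Games.

Section Smoothness.
Variables (R : realType) (n m : nat) (G : lrag R n m).
Implicit Types (a : profile G) (f : 'I_m -> nat -> R).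

Definition overlap a a' r : nat := #|[pred i | (r \in a i) && (r \in a' i)]|.

Lemma overlap_le a a' r : (overlap a a' r <= minn (load a r) (load a' r))%N.
Proof.
rewrite leq_min; apply/andP; split; apply: subset_leq_card;
  by apply/fintype.subsetP => i; rewrite !inE => /andP[].
Qed.

Lemma load_overlap_le a a' r : (load a r + load a' r - overlap a a' r <= n)%N.
Proof.
pose A := [pred i | r \in a i]; pose A' := [pred i | r \in a' i].
have AA' : #|[predI A & A']| = overlap a a' r by apply: eq_card => i; rewrite !inE.
have := cardUI A A'; have := max_card [predU A & A'].
by rewrite card_ord AA' /load -/A -/A' => U_le <-; rewrite addnK.
Qed.

Lemma card_newcomers a a' r :
  #|[pred i | (r \in a' i) && (r \notin a i)]| = (load a' r - overlap a a' r)%N.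
Proof.
pose A := [pred i | r \in a i]; pose A' := [pred i | r \in a' i].
have A'A : #|[predI A' & A]| = overlap a a' r by apply: eq_card => i; rewrite !inE andbC.
have := cardID A A'; rewrite A'A /load -/A' => <-; rewrite addKn.
by apply: eq_card => i; rewrite !inE andbC.
Qed.

Lemma sum_agent_cost f a :
  \sum_i agent_cost f i a = \sum_r (Defs.val r * f (ty r) (load a r)) *+ load a r.
Proof.
under eq_bigr do rewrite /agent_cost big_mkcond.
by rewrite exchange_big; apply: eq_bigr => r _; rewrite -big_mkcond sumr_const.
Qed.

Lemma sum_agent_cost_deviate f a a' :
  \sum_i agent_cost f i (deviate a i (a' i)) =
  \sum_r ((Defs.val r * f (ty r) (load a r)) *+ overlap a a' r +
          (Defs.val r * f (ty r) (load a r).+1) *+ (load a' r - overlap a a' r)).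
Proof.
pose F (r : res G) k := Defs.val r * f (ty r) k.
rewrite (eq_bigr (fun i => \sum_r if r \in a' i then
           F r (if r \in a i then load a r else (load a r).+1) else 0)); last first.
  move=> i _; rewrite /agent_cost ffunE eqxx big_mkcond; apply: eq_bigr => r _.
  by case: ifP => // r_in; rewrite load_deviate.
rewrite exchange_big; apply: eq_bigr => r _.
rewrite -big_mkcond (bigID (fun i => r \in a i)) /= -card_newcomers.
congr (_ + _).
  rewrite (eq_bigr (fun=> F r (load a r))); last by move=> i /andP[_ ->].
  by rewrite sumr_const; congr (_ *+ _); apply: eq_card => i; rewrite !inE andbC.
rewrite (eq_bigr (fun=> F r (load a r).+1)); last by move=> i /andP[_ /negbTE ->].
by rewrite sumr_const.
Qed.

Lemma sum_deviation_gain f a a' :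
  \sum_i (agent_cost f i (deviate a i (a' i)) - agent_cost f i a) =
  \sum_r Defs.val r * deviation_gain n (f (ty r)) (load a r) (load a' r) (overlap a a' r).
Proof.
rewrite sumrB sum_agent_cost_deviate sum_agent_cost -sumrB; apply: eq_bigr => r _.
rewrite -!mulrnAr -mulrDr -mulrBr.
by rewrite (deviation_gainE _ (overlap_le a a' r) (load_overlap_le a a' r)).
Qed.

Lemma NE_cost_le (c f : 'I_m -> nat -> R) (rho : 'I_m -> R) (rmin : R) a a' :
  (forall t, c t 0 = 0) -> (forall t k, (k <= n)%N -> 0 <= c t k) ->
  (forall t, LP_feasible n (c t) (f t) (rho t)) -> (forall t, rmin <= rho t) ->
  is_NE f a -> feasible a' -> rmin * cost c a <= cost c a'.
Proof.
move=> c0 c_ge0 feas rmin_le [_ a_NE] /forallP a'_feas.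
have : 0 <= \sum_i (agent_cost f i (deviate a i (a' i)) - agent_cost f i a).
  by apply: sumr_ge0 => i _; rewrite subr_ge0 a_NE.
rewrite sum_deviation_gain => gain_ge0.
have smooth :
    \sum_r Defs.val r * deviation_gain n (f (ty r)) (load a r) (load a' r) (overlap a a' r)
    <= cost c a' - \sum_r Defs.val r * (rho (ty r) * c (ty r) (load a r)).
  rewrite /cost -sumrB; apply: ler_sum => r _; rewrite -mulrBr ler_wpM2l ?val_ge0 //.
  exact: deviation_gain_le_LP (c0 _) (feas _) (load_overlap_le a a' r) (overlap_le a a' r).
have rmin_cost : rmin * cost c a <=
    \sum_r Defs.val r * (rho (ty r) * c (ty r) (load a r)).
  rewrite /cost mulr_sumr; apply: ler_sum => r _.
  by rewrite mulrCA ler_wpM2l ?val_ge0 // ler_wpM2r ?c_ge0 ?load_le.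
lra.
Qed.

End Smoothness.

Lemma PoA_class_le (R : realType) n m (c f : 'I_m -> nat -> R) (rho : 'I_m -> R)
    (rmin : R) :
  (forall t, c t 0 = 0) -> (forall t k, (k <= n)%N -> 0 <= c t k) ->
  (forall t, LP_feasible n (c t) (f t) (rho t)) ->
  0 <= rmin -> (forall t, rmin <= rho t) ->
  (PoA_class n c f <= (rmin%:E)^-1)%E.
Proof.
move=> c0 c_ge0 feas rmin_ge0 rmin_le.
have [->|rmin_neq0] := eqVneq rmin 0; first by rewrite inve0 leey.
have rmin_gt0 : 0 < rmin by rewrite lt_def rmin_neq0.
apply: ge_ereal_sup => _ [G ->]; apply: ge_ereal_sup => _ [a a_NE <-].
have [r opt_r _] := opt_costE c_ge0 a_NE.1.
have Ca_le : rmin * cost c a <= r.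
  rewrite -lee_fin -opt_r; apply: le_ereal_inf_tmp => _ [a' a'_feas <-].
  by rewrite lee_fin (NE_cost_le c0 c_ge0 feas rmin_le a_NE a'_feas).
rewrite opt_r.
have [->|Ca_neq0] := eqVneq (cost c a) 0.
  by rewrite mul0e inve_ge0 lee_fin.
have r_gt0 : 0 < r.
  by apply: lt_le_trans Ca_le; rewrite mulr_gt0 // lt_def Ca_neq0 cost_ge0.
rewrite !inver (gt_eqF r_gt0) (gt_eqF rmin_gt0) -EFinM lee_fin.
by rewrite ler_pdivrMr // ler_pdivlMl.
Qed.

Definition cdiff (N : nat) (i j : 'I_N.+1) : nat := (i - j)%R.

(* Agents are the elements of Z/(N+1) and each kind [b] has N+1 resources
   [(b, j)] of value [w b].  Agent [i] uses the [(b, j)] with [i - j] in a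
   window; the two windows overlap in [Z b] resources per kind, so every
   resource has load [X b] in the first profile and [Y b] in the second. *)
Section CyclicGame.
Variables (R : realType) (N m : nat) (K : finType) (t : 'I_m) (w : K -> R).
Hypothesis w_ge0 : forall b, 0 <= w b.

Definition window (lo hi : K -> nat) (i : 'I_N.+1) : {set K * 'I_N.+1} :=
  [set r | (lo r.1 <= cdiff i r.2 < hi r.1)%N].

Lemma sum_window (F : K -> R) (lo hi : K -> nat) i : (forall b, hi b <= N.+1)%N ->
  \sum_(r in window lo hi i) F r.1 = \sum_b F b *+ (hi b - lo b).
Proof.
move=> hi_N.
rewrite (eq_bigl (fun r => xpredT r.1 && (lo r.1 <= cdiff i r.2 < hi r.1))%N);
  last by move=> r; rewrite inE.
rewrite -(pair_big_dep xpredT (fun b j => lo b <= cdiff i j < hi b)%N (fun b _ => F b)).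
apply: eq_bigr => b _; rewrite sumr_const.
have i_sub_inj : injective (fun j : 'I_N.+1 => i - j) by move=> j k /addrI /oppr_inj.
rewrite (card_preim_inj [pred k : 'I_N.+1 | lo b <= k < hi b]%N i_sub_inj).
by rewrite card_ord_range.
Qed.

Variables X Y Z : K -> nat.
Hypothesis Z_le : forall b, (Z b <= minn (X b) (Y b))%N.
Hypothesis XYZ_le : forall b, (X b + Y b - Z b <= N.+1)%N.

Definition ne_action := window (fun=> 0%N) X.
Definition opt_action := window (fun b => X b - Z b)%N (fun b => X b + Y b - Z b)%N.

Definition cyclic_game : lrag R N.+1 m :=
  @LRAG R N.+1 m (K * 'I_N.+1)%type (fun r => w r.1) (fun=> t)
    (fun i => [set ne_action i; opt_action i]) (fun r => w_ge0 r.1)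
    (fun i => ex_intro _ (ne_action i) (set21 _ _)).

Definition window_profile lo hi : profile cyclic_game := [ffun i => window lo hi i].
Definition ne_profile := window_profile (fun=> 0%N) X.
Definition opt_profile :=
  window_profile (fun b => X b - Z b)%N (fun b => X b + Y b - Z b)%N.

Lemma load_window lo hi r : (hi r.1 <= N.+1)%N ->
  load (window_profile lo hi) r = (hi r.1 - lo r.1)%N.
Proof.
move=> hi_N; rewrite /load -(card_ord_range (lo r.1) hi_N).
rewrite -(card_preim_inj [pred k : 'I_N.+1 | lo r.1 <= k < hi r.1]%N (addIr (- r.2))).
by apply: eq_card => i; rewrite !inE ffunE inE.
Qed.

Lemma cost_window (c : 'I_m -> nat -> R) lo hi : (forall b, hi b <= N.+1)%N ->
  cost c (window_profile lo hi) = (\sum_b w b * c t (hi b - lo b)%N) *+ N.+1.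
Proof.
move=> hi_N; rewrite /cost.
rewrite (eq_bigr (fun r : K * 'I_N.+1 => w r.1 * c t (hi r.1 - lo r.1)%N));
  last by move=> r _; rewrite load_window.
rewrite -(pair_big xpredT xpredT (fun b (_ : 'I_N.+1) => w b * c t (hi b - lo b)%N)).
by rewrite -sumrMnl; apply: eq_bigr => b _; rewrite sumr_const card_ord.
Qed.

Lemma X_le b : (X b <= N.+1)%N.
Proof. by have := Z_le b; have := XYZ_le b; lia. Qed.

Lemma cost_ne c : cost c ne_profile = (\sum_b w b * c t (X b)) *+ N.+1.
Proof. by rewrite cost_window; [under eq_bigr do rewrite subn0 | exact: X_le]. Qed.

Lemma cost_opt c : cost c opt_profile = (\sum_b w b * c t (Y b)) *+ N.+1.
Proof.
rewrite cost_window //; congr (_ *+ _); apply: eq_bigr => b _.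
by have -> : (X b + Y b - Z b - (X b - Z b) = Y b)%N by have := Z_le b; lia.
Qed.

Lemma load_ne r : load ne_profile r = X r.1.
Proof. by rewrite load_window ?subn0 ?X_le. Qed.

Lemma agent_cost_ne (f : 'I_m -> nat -> R) i :
  agent_cost f i ne_profile = \sum_b (w b * f t (X b)) *+ X b.
Proof.
rewrite /agent_cost ffunE (eq_bigr (fun r => w r.1 * f t (X r.1))); last first.
  by move=> r _; rewrite load_ne.
have X_N := X_le.
by rewrite (sum_window (fun b => w b * f t (X b))) //; under eq_bigr do rewrite subn0.
Qed.

Lemma agent_cost_deviate (f : 'I_m -> nat -> R) i :
  agent_cost f i (deviate ne_profile i (opt_action i)) =
  \sum_b ((w b * f t (X b)) *+ Z b + (w b * f t (X b).+1) *+ (Y b - Z b)).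
Proof.
rewrite /agent_cost ffunE eqxx (bigID (mem (ne_action i))) /=.
rewrite (eq_bigr (fun r => w r.1 * f t (X r.1))); last first.
  by move=> r /andP[r_opt r_ne]; rewrite load_deviate // ffunE r_ne load_ne.
rewrite [Q in _ + Q](eq_bigr (fun r => w r.1 * f t (X r.1).+1)); last first.
  by move=> r /andP[r_opt /negbTE r_ne]; rewrite load_deviate // ffunE r_ne load_ne.
rewrite (eq_bigl (mem (window (fun b => X b - Z b)%N X i))); last first.
  by move=> r; rewrite !inE; have := Z_le r.1; lia.
rewrite [Q in _ + Q](eq_bigl (mem (window X (fun b => X b + Y b - Z b)%N i))); last first.
  by move=> r; rewrite !inE; have := Z_le r.1; lia.
have X_N := X_le.
rewrite (sum_window (fun b => w b * f t (X b))) //.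
rewrite (sum_window (fun b => w b * f t (X b).+1)) // -big_split; apply: eq_bigr => b _.
have [-> ->] : (X b - (X b - Z b) = Z b /\ X b + Y b - Z b - X b = Y b - Z b)%N.
  by have := Z_le b; lia.
by [].
Qed.

Lemma cyclic_game_NE (f : 'I_m -> nat -> R) :
  0 <= \sum_b w b * deviation_gain N.+1 (f t) (X b) (Y b) (Z b) -> is_NE f ne_profile.
Proof.
move=> gain_ge0; split=> [|i S]; first by apply/forallP => i; rewrite ffunE; exact: set21.
move=> /set2P[->|->].
  have -> : deviate ne_profile i (ne_action i) = ne_profile.
    by apply/ffunP => j; rewrite !ffunE; case: eqP => [->|].
  exact: lexx.
rewrite -subr_ge0 agent_cost_deviate agent_cost_ne -sumrB.
under eq_bigr => b _ do
  rewrite -!mulrnAr -mulrDr -mulrBr (deviation_gainE _ (Z_le b) (XYZ_le b)).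
exact: gain_ge0.
Qed.

Lemma PoA_class_ge_cyclic (c f : 'I_m -> nat -> R) (rho : R) :
  (forall s k, (k <= N.+1)%N -> 0 <= c s k) -> 0 < rho ->
  0 <= \sum_b w b * deviation_gain N.+1 (f t) (X b) (Y b) (Z b) ->
  \sum_b w b * (c t (Y b) - rho * c t (X b)) < 0 ->
  ((rho^-1)%:E <= PoA_class N.+1 c f)%E.
Proof.
move=> c_ge0 rho_gt0 gain_ge0 cost_lt.
apply: (@PoA_class_ge _ _ _ cyclic_game c c_ge0 f ne_profile opt_profile) => //.
- exact: cyclic_game_NE.
- by apply/forallP => i; rewrite ffunE; exact: set22.
rewrite cost_ne cost_opt mulrnAr ltr_pMn2r // -subr_lt0 mulr_sumr -sumrB.
by under eq_bigr do rewrite mulrCA -mulrBr.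
Qed.

End CyclicGame.

Lemma inve_le_of_gt (R : realType) (rs : R) (P : \bar R) : 0 <= rs ->
  (forall rho, rs < rho -> ((rho^-1)%:E <= P)%E) -> ((rs%:E)^-1 <= P)%E.
Proof.
move=> rs_ge0 P_ge; have P_ge1 := P_ge (rs + 1) ltac:(lra).
case: P P_ge P_ge1 => [p| |] P_ge P_ge1; [|exact: leey|by rewrite leeNy_eq in P_ge1].
rewrite lee_fin in P_ge1.
have p_gt0 : 0 < p by apply: lt_le_trans P_ge1; rewrite invr_gt0; lra.
have inv_p_le : p^-1 <= rs.
  apply/unstable.ler_gtP => rho rs_lt; have rho_gt0 : 0 < rho by lra.
  by rewrite -[rho]invrK lef_pV2 ?posrE ?invr_gt0 // -lee_fin P_ge.
have rs_gt0 : 0 < rs by apply: lt_le_trans inv_p_le; rewrite invr_gt0.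
by rewrite inver gt_eqF // lee_fin -[p]invrK lef_pV2 ?posrE ?invr_gt0.
Qed.

Lemma PoA_class_ge_inv (R : realType) N m (c f : 'I_m -> nat -> R) t (rho : R) :
  (forall t k, (k <= N.+1)%N -> 0 <= c t k) -> 0 < rho ->
  (forall mu, 0 <= mu -> ~ LP_feasible N.+1 (c t) (fun k => mu * f t k) rho) ->
  ((rho^-1)%:E <= PoA_class N.+1 c f)%E.
Proof.
move=> c_ge0 rho_gt0 infeasible.
pose P (k : 'I_N.+2 * 'I_N.+2 * 'I_N.+2) := in_IR N.+1 k.1.1 k.1.2 k.2.
pose a (k : 'I_N.+2 * 'I_N.+2 * 'I_N.+2) := c t k.1.2 - rho * c t k.1.1.
pose D (k : 'I_N.+2 * 'I_N.+2 * 'I_N.+2) := deviation_gain N.+1 (f t) k.1.1 k.1.2 k.2.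
have [[k1 [k2 [t1 [t2 [P1 P2 t1_ge0 t2_ge0 [gain_ge0 cost_lt]]]]]]|no_cert] :=
  pselect (exists k1 k2 (t1 t2 : R), [/\ P k1, P k2, 0 <= t1, 0 <= t2 &
             0 <= t1 * D k1 + t2 * D k2 /\ t1 * a k1 + t2 * a k2 < 0]).
  have w_ge0 (b : bool) : 0 <= if b then t1 else t2 by case: b.
  pose X b : nat := if b then k1.1.1 else k2.1.1.
  pose Y b : nat := if b then k1.1.2 else k2.1.2.
  pose Z b : nat := if b then k1.2 else k2.2.
  apply: (@PoA_class_ge_cyclic _ _ _ _ t _ w_ge0 X Y Z); rewrite ?big_bool //.
    by case; [move: P1|move: P2] => /and4P[].
  by case; [move: P1|move: P2] => /and4P[].
have [mu mu_ge0 mu_le] : exists2 mu, 0 <= mu & forall k, P k -> mu * D k <= a k.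
  apply: farkas_dim1 => k1 k2 t1 t2 P1 P2 t1_ge0 t2_ge0 gain_ge0.
  by rewrite leNgt; apply/negP => cost_lt; apply: no_cert; exists k1, k2, t1, t2.
exfalso; apply: (infeasible mu mu_ge0); apply/LP_feasibleP => x y z xyz.
have [x_lt y_lt z_lt] : [/\ x < N.+2, y < N.+2 & z < N.+2]%N.
  by case/and4P: xyz; split; lia.
by rewrite deviation_gainZ; apply: (mu_le (Ordinal x_lt, Ordinal y_lt, Ordinal z_lt)).
Qed.

Lemma PoA_class_ge_LP_optimal (R : realType) N m (c f : 'I_m -> nat -> R) t
    (fs : nat -> R) (rs : R) :
  (forall t k, (k <= N.+1)%N -> 0 <= c t k) -> LP_optimal N.+1 (c t) fs rs ->
  (((rs%:E)^-1) <= PoA_class N.+1 c f)%E.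
Proof.
move=> c_ge0 rs_opt; have rs_ge0 := LP_optimal_ge0 (c_ge0 t) rs_opt.
apply: (inve_le_of_gt rs_ge0) => rho rs_lt.
apply: (PoA_class_ge_inv (t := t)) => //; first exact: le_lt_trans rs_ge0 rs_lt.
by move=> mu _ /rs_opt.2; lra.
Qed.

Theorem theorem6 (R : realType) (n m : nat) (c : 'I_m -> nat -> R)
    (fstar : 'I_m -> nat -> R) (rhostar : 'I_m -> R) :
  (0 < n)%N -> (0 < m)%N ->
  (forall t, c t 0%N = 0) ->
  (forall t (k : nat), (1 <= k <= n)%N -> 0 < c t k) ->
  (forall t, LP_optimal n (c t) (fstar t) (rhostar t)) ->
  ((forall t (k : nat), (1 <= k <= n)%N -> 0 <= fstar t k) /\
   (forall f : 'I_m -> nat -> R,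
      (forall t (k : nat), (1 <= k <= n)%N -> 0 <= f t k) ->
      (PoA_class n c fstar <= PoA_class n c f)%E)) /\
  PoA_class n c fstar = \big[Order.max/-oo%E]_(t < m) ((rhostar t)%:E)^-1%E.
Proof.
case: n => [//|N] _ m_gt0 c0 c_gt0 opt.
have c_ge0 t k : (k <= N.+1)%N -> 0 <= c t k.
  by case: k => [|k] k_le; [rewrite c0 | apply/ltW/c_gt0].
have rho_ge0 t : 0 <= rhostar t := LP_optimal_ge0 (c_ge0 t) (opt t).
pose tmin := [arg min_(t < Ordinal m_gt0) rhostar t]%O.
have rho_min t : rhostar tmin <= rhostar t.
  by rewrite /tmin; case: arg_minP => // i _; apply.
pose PoA_star := \big[Order.max/-oo%E]_(t < m) ((rhostar t)%:E)^-1%E.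
have upper : (PoA_class N.+1 c fstar <= PoA_star)%E.
  apply: le_trans (bigmax_sup tmin _ _ _ isT (lexx _)).
  exact: PoA_class_le c0 c_ge0 (fun t => (opt t).1) (rho_ge0 tmin) rho_min.
have lower f : (PoA_star <= PoA_class N.+1 c f)%E.
  apply: bigmax_le => [|t _]; first exact: leNye.
  exact: PoA_class_ge_LP_optimal c_ge0 (opt t).
split; last by apply/le_anti; rewrite upper lower.
split=> [t k k_le|f _]; last exact: le_trans upper (lower f).
exact: (LP_feasible_ge0 (c_ge0 t) (c0 t) (rho_ge0 t) (opt t).1 k_le).
Qed.
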